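(* Let $d,k\in\mathbb{N}$ with $k\ge2$ and $d>2k$, and put $n=d-2k$. Let $\phi=\alpha\phi_1+\beta\phi_2$ with $\alpha,\beta>0$. Then every $\mathbf{z}\in\Lambda_1$ with $\phi[\mathbf{z}]=\min\{\phi[\mathbf{u}]:\mathbf{u}\in\Lambda_1\}$ can be written as $$\mathbf{z}=\operatorname{sgn}(l)\,\chi_S+\frac{a}{n}\mathbf{j}$$ for some integers $l,a$ with $-\frac d2\le l<\frac d2$ and some $S\subseteq\{1,\dots,d\}$ with $|S|=|l|$ (i.e. up to a permutation of coordinates $\mathbf{z}=\operatorname{sgn}(l)[1^{|l|},0^{d-|l|}]+\frac an\mathbf{j}$). Moreover, each such minimal $\mathbf{z}$ has only one representation of this type.
   Context: $\mathbf{e}_1,\dots,\mathbf{e}_d$ is the standard basis of $\mathbb{R}^d$, $\mathbf{j}=(1,\dots,1)$, $\chi_S$ the indicator vector of $S$, and $\operatorname{sgn}(0)=0$. $L^1$ is the set of vectors in $\mathbb{Z}^d$ with $k$ coordinates $-1$ and $d-k$ coordinates $1$; $\Lambda$ is the $\mathbb{Z}$-span of $\mathbf{e}_1,\dots,\mathbf{e}_d,\frac{\mathbf{j}}{n}$; $\Lambda_1=\{\mathbf{z}\in\Lambda:\ \mathbf{z}\cdot\boldsymbol{\ell}\equiv1\pmod2\ \forall\boldsymbol{\ell}\in L^1\}$. $\phi_1[\mathbf{x}]=(\sum_ix_i)^2$, $\phi_2[\mathbf{x}]=\bigl|\mathbf{x}-\frac{\sum_ix_i}{d}\mathbf{j}\bigr|^2$.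 *)

From HB Require Import structures.
From mathcomp Require Import all_boot all_order all_algebra.
Set Implicit Arguments. Unset Strict Implicit. Unset Printing Implicit Defensive.
Import Order.TTheory GRing.Theory Num.Theory.
Local Open Scope ring_scope.

Section Defs.
Variable R : realFieldType.

Definition jvec (d : nat) : 'rV[R]_d := const_mx 1.

Definition chi (d : nat) (S : {set 'I_d}) : 'rV[R]_d := \row_i (i \in S)%:R.

Definition dot (d : nat) (x y : 'rV[R]_d) : R := \sum_i x 0 i * y 0 i.

Definition csum (d : nat) (x : 'rV[R]_d) : R := \sum_i x 0 i.

Definition in_L1 (d k : nat) (l : 'rV[int]_d) : Prop :=
  (forall i, l 0 i = 1 \/ l 0 i = -1) /\ #|[set i | l 0 i == -1]| = k.

Definition in_Lambda (d n : nat) (z : 'rV[R]_d) : Prop :=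
  exists (m : 'rV[int]_d) (a : int),
    z = map_mx (fun t : int => t%:~R) m + ((a%:~R) / n%:R) *: jvec d.

(* x ≡ 1 (mod 2) for a real x: x is an odd integer *)
Definition odd_real (x : R) : Prop := exists t : int, x = (2 * t + 1)%:~R.

Definition in_Lambda1 (d k : nat) (z : 'rV[R]_d) : Prop :=
  in_Lambda (d - 2 * k) z /\
  forall l : 'rV[int]_d, in_L1 k l ->
    odd_real (dot z (map_mx (fun t : int => t%:~R) l)).

Definition phi1 (d : nat) (x : 'rV[R]_d) : R := (csum x) ^+ 2.

Definition phi2 (d : nat) (x : 'rV[R]_d) : R :=
  \sum_i (x 0 i - csum x / d%:R) ^+ 2.

Definition phi (d : nat) (alpha beta : R) (x : 'rV[R]_d) : R :=
  alpha * phi1 x + beta * phi2 x.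

Definition is_rep (d n : nat) (z : 'rV[R]_d) (l a : int) (S : {set 'I_d}) : Prop :=
  [/\ - (d%:R / 2) <= (l%:~R : R), (l%:~R : R) < d%:R / 2,
      #|S| = `|l|%N &
      z = (sgz l)%:~R *: chi S + ((a%:~R) / n%:R) *: jvec d].

End Defs.

From HB Require Import structures.
From mathcomp Require Import all_boot all_order all_algebra.
From mathcomp Require Import zify ring lra.
Set Implicit Arguments. Unset Strict Implicit. Unset Printing Implicit Defensive.
Import Order.TTheory GRing.Theory Num.Theory.
Local Open Scope ring_scope.

(* Write a minimiser as z = m + (a/n) j with m integral.  Moving one unit from
   coordinate i to coordinate j, z |-> z + e_j - e_i, stays in Lambda_1 (it
   changes every z.l by l_j - l_i, which is even), fixes sum z and hence phi_1,
   and changes phi_2 by 2 (1 - (z_i - z_j)).  So at a minimum the m_i take at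
   most two consecutive values c, c + 1, i.e. z = chi_S + (c + a/n) j, and
   passing to the complement of S when 2|S| >= d gives the normal form.
   Uniqueness: two representations have the same coordinate sum, so l - l' is a
   multiple of d, while |l - l'| < d. *)

Lemma spread1_two_values (T : finType) (f : T -> int) :
  (forall x y, f x - f y <= 1) -> exists c, forall x, f x = c \/ f x = c + 1.
Proof.
move=> spread; have [x0 _ | T0] := pickP (fun _ : T => true); last first.
  by exists 0 => x; have := T0 x.
have [/existsP[x1 /eqP fx1] | /existsPn none] :=
  boolP [exists x, f x == f x0 - 1].
  by exists (f x0 - 1) => x; have := spread x x1; have := spread x0 x; lia.
exists (f x0) => x.
by have := spread x x0; have := spread x0 x; have := none x; lia.
Qed.

Lemma odd_realD_diff (R : realFieldType) (y : R) (p q : int) :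
  odd_real y -> (p = 1 \/ p = -1) -> (q = 1 \/ q = -1) ->
  odd_real (y + p%:~R - q%:~R).
Proof.
move=> [t ->] p1 q1; rewrite -intrD -intrB.
by case: p1 => ->; case: q1 => ->;
  [exists t | exists (t + 1) | exists (t - 1) | exists t]; congr _%:~R; lia.
Qed.

Section Rows.
Variable R : realFieldType.

Local Notation ivec m := (map_mx (fun t : int => t%:~R : R) m).

Lemma dotC d (x y : 'rV[R]_d) : dot x y = dot y x.
Proof. by apply: eq_bigr => t _; rewrite mulrC. Qed.

Lemma dotDl d (x y w : 'rV[R]_d) : dot (x + y) w = dot x w + dot y w.
Proof. by rewrite /dot -big_split; apply: eq_bigr => t _; rewrite mxE mulrDl. Qed.

Lemma dotBl d (x y w : 'rV[R]_d) : dot (x - y) w = dot x w - dot y w.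
Proof.
by rewrite /dot -sumrB; apply: eq_bigr => t _; rewrite !mxE mulrBl.
Qed.

Lemma dot_deltar d (x : 'rV[R]_d) j : dot x 'e_j = x 0 j.
Proof.
rewrite /dot (bigD1 j) //= mxE !eqxx mulr1 big1 ?addr0 // => t /negbTE tj.
by rewrite mxE tj andbF mulr0.
Qed.

Lemma csum_dot d (x : 'rV[R]_d) : csum x = dot x (jvec R d).
Proof. by apply: eq_bigr => t _; rewrite mxE mulr1. Qed.

Lemma dot_shiftl d (x w : 'rV[R]_d) i j :
  dot (x + 'e_j - 'e_i) w = dot x w + w 0 j - w 0 i.
Proof. by rewrite dotBl dotDl ![dot 'e__ w]dotC !dot_deltar. Qed.

Lemma csum_shift d (x : 'rV[R]_d) i j : csum (x + 'e_j - 'e_i) = csum x.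
Proof. by rewrite !csum_dot dot_shiftl !mxE addrK. Qed.

Lemma phi2_shift d (x : 'rV[R]_d) i j : i != j ->
  phi2 (x + 'e_j - 'e_i) = phi2 x + 2 * (1 - (x 0 i - x 0 j)).
Proof.
move=> ij; rewrite /phi2 csum_shift; set mu := csum x / _.
rewrite (bigD1 i) // (bigD1 j) 1?eq_sym //= [in RHS](bigD1 i) //.
rewrite [in RHS](bigD1 j) 1?eq_sym //= !mxE !eqxx (negbTE ij) eq_sym (negbTE ij).
rewrite (eq_bigr (fun t => (x 0 t - mu) ^+ 2)) => [|t /andP[ti tj]]; last first.
  by rewrite !mxE (negbTE ti) (negbTE tj) /= subr0 addr0.
rewrite /=; ring.
Qed.

Lemma phi_shift d (alpha beta : R) (x : 'rV[R]_d) i j : i != j ->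
  phi alpha beta (x + 'e_j - 'e_i)
  = phi alpha beta x + 2 * beta * (1 - (x 0 i - x 0 j)).
Proof.
by move=> ij; rewrite /phi /phi1 csum_shift phi2_shift //; ring.
Qed.

Lemma in_Lambda_shift d n (x : 'rV[R]_d) i j :
  in_Lambda n x -> in_Lambda n (x + 'e_j - 'e_i).
Proof.
move=> [m [a ->]]; exists (m + 'e_j - 'e_i), a; apply/rowP => t.
by rewrite !mxE intrB intrD !mulrz_nat; lra.
Qed.

Lemma in_Lambda1_shift d k (x : 'rV[R]_d) i j :
  in_Lambda1 k x -> in_Lambda1 k (x + 'e_j - 'e_i).
Proof.
move=> [xL xodd]; split; first exact: in_Lambda_shift.
move=> l lL1; rewrite dot_shiftl !mxE.
exact: odd_realD_diff (xodd l lL1) (lL1.1 j) (lL1.1 i).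
Qed.

Lemma minimizer_spread d k (alpha beta : R) (z : 'rV[R]_d) :
  0 < beta -> in_Lambda1 k z ->
  (forall u : 'rV[R]_d, in_Lambda1 k u -> phi alpha beta z <= phi alpha beta u) ->
  forall i j, z 0 i - z 0 j < 2.
Proof.
move=> beta0 zL zmin i j; rewrite ltNge; apply/negP => spread.
have ij : i != j by apply/eqP => eij; move: spread; rewrite eij subrr; lra.
have gain : 2 * beta * (1 - (z 0 i - z 0 j)) < 0.
  by rewrite pmulr_rlt0 ?mulr_gt0 //; lra.
by have := zmin _ (in_Lambda1_shift i j zL); rewrite phi_shift //; lra.
Qed.

Lemma ivec_two_values d (m : 'rV[int]_d) (c : int) :
  (forall t, m 0 t = c \/ m 0 t = c + 1) ->
  ivec m = chi R [set t | m 0 t != c] + c%:~R *: jvec R d.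
Proof.
move=> mc; apply/rowP => t; rewrite !mxE inE mulr1.
have [->|->] := mc t; first by rewrite eqxx add0r.
have -> : c + 1 != c by lia.
by rewrite intrD addrC.
Qed.

Lemma csumD d (x y : 'rV[R]_d) : csum (x + y) = csum x + csum y.
Proof. by rewrite /csum -big_split; apply: eq_bigr => t _; rewrite mxE. Qed.

Lemma csumZ d (c : R) (x : 'rV[R]_d) : csum (c *: x) = c * csum x.
Proof. by rewrite /csum mulr_sumr; apply: eq_bigr => t _; rewrite mxE. Qed.

Lemma csum_chi d (S : {set 'I_d}) : csum (chi R S) = #|S|%:R.
Proof.
rewrite -sumr_const [RHS]big_mkcond; apply: eq_bigr => t _.
by rewrite mxE; case: (t \in S).
Qed.

Lemma csum_jvec d : csum (jvec R d) = d%:R.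
Proof.
rewrite /csum (eq_bigr (fun=> 1)) => [|t _]; last by rewrite mxE.
by rewrite sumr_const card_ord.
Qed.

Lemma chi_setC d (S : {set 'I_d}) : chi R (~: S) = jvec R d - chi R S.
Proof.
by apply/rowP => t; rewrite !mxE inE; case: (t \in S); rewrite ?subrr ?subr0.
Qed.

Lemma scale_sgz_card_chi d (S : {set 'I_d}) :
  (sgz (#|S|%:Z))%:~R *: chi R S = chi R S.
Proof.
have [/cards0_eq -> | S0] := posnP #|S|.
  by apply/rowP => t; rewrite !mxE in_set0 mulr0.
by rewrite gtr0_sgz ?ltz_nat // scale1r.
Qed.

Lemma is_rep_coord d n (z : 'rV[R]_d) l a S : is_rep n z l a S ->
  forall t, z 0 t = (sgz l)%:~R * (t \in S)%:R + a%:~R / n%:R.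
Proof. by case=> _ _ _ -> t; rewrite !mxE mulr1. Qed.

Lemma csum_is_rep d n (z : 'rV[R]_d) l a S : is_rep n z l a S ->
  csum z = l%:~R + d%:R * (a%:~R / n%:R).
Proof.
case=> _ _ cardS ->; rewrite csumD !csumZ csum_chi csum_jvec cardS.
by rewrite [in RHS](intEsg l) intrM pmulrn [d%:R * _]mulrC.
Qed.

Lemma exists_rep d n (S : {set 'I_d}) (b : int) : (0 < d)%N -> (0 < n)%N ->
  exists l a T, is_rep n (chi R S + (b%:~R / n%:R) *: jvec R d) l a T.
Proof.
move=> d0 n0; have nR : n%:R != 0 :> R by rewrite pnatr_eq0 -lt0n.
have dR : 0 < d%:R :> R by rewrite ltr0n.
have [small | big] := ltnP (2 * #|S|) d.
  have : (2 * #|S|)%:R < d%:R :> R by rewrite ltr_nat.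
  rewrite natrM => Sd; exists #|S|%:Z, b, S.
  have S0 : 0 <= #|S|%:R :> R := ler0n _ _.
  by split; rewrite ?absz_nat ?scale_sgz_card_chi // -pmulrn; lra.
have cardC : (#|S| + #|~: S|)%:R = d%:R :> R by rewrite cardsC card_ord.
have : d%:R <= (2 * #|S|)%:R :> R by rewrite ler_nat.
rewrite natrD in cardC; rewrite natrM => dS.
have CS0 : 0 <= #|~: S|%:R :> R := ler0n _ _.
exists (- #|~: S|%:Z), (b + n%:Z), (~: S); split.
- by rewrite intrN -pmulrn; lra.
- by rewrite intrN -pmulrn; lra.
- by rewrite abszN absz_nat.
rewrite sgzN intrN scaleNr scale_sgz_card_chi chi_setC intrD mulrDl divff //.
by rewrite scalerDl scale1r opprB [_ *: _ + jvec _ _]addrC addrA subrK.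
Qed.

Lemma sgz_chi_inj d (l : int) (S S' : {set 'I_d}) :
  #|S| = `|l|%N -> #|S'| = `|l|%N ->
  (forall t, (sgz l)%:~R * (t \in S)%:R = (sgz l)%:~R * (t \in S')%:R :> R) ->
  S = S'.
Proof.
move=> cardS cardS' eqS; have [l0 | l_neq0] := eqVneq l 0.
  by rewrite l0 in cardS cardS'; rewrite (cards0_eq cardS) (cards0_eq cardS').
have sgz_neq0 : (sgz l)%:~R != 0 :> R by rewrite intr_eq0 sgz_eq0.
apply/setP => t; have /(mulfI sgz_neq0) := eqS t.
by case: (t \in S); case: (t \in S') => // /eqP;
  rewrite ?oner_eq0 // eq_sym oner_eq0.
Qed.

Lemma is_rep_uniq d n (z : 'rV[R]_d) l a S l' a' S' : (0 < d)%N -> (0 < n)%N ->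
  is_rep n z l a S -> is_rep n z l' a' S' -> [/\ l' = l, a' = a & S' = S].
Proof.
move=> d0 n0 rep rep'.
have coordE t := etrans (esym (is_rep_coord rep t)) (is_rep_coord rep' t).
pose i0 := Ordinal d0.
pose e : int := sgz l * (i0 \in S) - sgz l' * (i0 \in S').
have offset : a'%:~R / n%:R - a%:~R / n%:R = e%:~R :> R.
  by rewrite /e intrB !intrM !pmulrn; have := coordE i0; lra.
have gap : l%:~R - l'%:~R = d%:R * e%:~R :> R.
  have := etrans (esym (csum_is_rep rep)) (csum_is_rep rep').
  by rewrite -offset mulrBr; lra.
have e0 : e = 0.
  have [lo hi _ _] := rep; have [lo' hi' _ _] := rep'.
  have dR : 0 < d%:R :> R by rewrite ltr0n.
  have : e%:~R < 1 :> R by nra.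
  have : (- e)%:~R < 1 :> R by rewrite intrN; nra.
  by rewrite !ltrz1; lia.
have ll' : l' = l.
  by apply/eqP; rewrite -(eqr_int R) eq_sym -subr_eq0 gap e0 mulr0.
have aa' : a' = a.
  have nR : n%:R^-1 != 0 :> R by rewrite invr_eq0 pnatr_eq0 -lt0n.
  apply/eqP; rewrite -(eqr_int R); apply/eqP/(mulIf nR)/eqP.
  by rewrite -subr_eq0 offset e0.
subst l' a'; split=> //; have [_ _ cardS _] := rep; have [_ _ cardS' _] := rep'.
apply: sgz_chi_inj cardS' cardS _ => t.
by apply: (addIr (a%:~R / n%:R)); rewrite coordE.
Qed.

End Rows.

Theorem lemma2 (R : realFieldType) (d k : nat) (alpha beta : R)
  (hk : (2 <= k)%N) (hd : (2 * k < d)%N)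
  (halpha : 0 < alpha) (hbeta : 0 < beta)
  (z : 'rV[R]_d) (hz : in_Lambda1 k z)
  (hmin : forall u : 'rV[R]_d, in_Lambda1 k u -> phi alpha beta z <= phi alpha beta u) :
  exists (l a : int) (S : {set 'I_d}),
    is_rep (d - 2 * k) z l a S /\
    (forall (l' a' : int) (S' : {set 'I_d}),
        is_rep (d - 2 * k) z l' a' S' -> [/\ l' = l, a' = a & S' = S]).
Proof.
have d0 : (0 < d)%N by lia.
have n0 : (0 < d - 2 * k)%N by rewrite subn_gt0.
have nR : (d - 2 * k)%:R != 0 :> R by rewrite pnatr_eq0 -lt0n.
have [[m [a zE]] _] := hz.
have [c mc] : exists c, forall t, m 0 t = c \/ m 0 t = c + 1.
  apply: spread1_two_values => i j.
  have := minimizer_spread hbeta hz hmin i j; rewrite zE !mxE => spread.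
  have : (m 0 i - m 0 j)%:~R < (2 : int)%:~R :> R by rewrite intrB; lra.
  by rewrite ltr_int; lia.
have [l [a' [S zrep]]] :=
  exists_rep R [set t | m 0 t != c] (a + c * (d - 2 * k)%:Z) d0 n0.
have zS : z = chi R [set t | m 0 t != c]
              + ((a + c * (d - 2 * k)%:Z)%:~R / (d - 2 * k)%:R) *: jvec R d.
  rewrite zE (ivec_two_values R mc) -addrA -scalerDl [c%:~R + _]addrC.
  by rewrite intrD mulrDl intrM -pmulrn mulfK.
rewrite -zS in zrep; exists l, a', S; split=> // l' a'' S'.
exact: is_rep_uniq d0 n0 zrep.
Qed.
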